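(* Let $q$ be a prime power, $\beta$ a primitive element of $\mathbb{F}_{q^2}$, $\mathrm{Tr}(x)=x+x^q$, and $\Psi:\mathbb{F}_{q^2}^n\to\mathbb{F}_q^{2n}$, $\Psi(\alpha_0,\ldots,\alpha_{n-1})=\left(\mathrm{Tr}(\beta\alpha_0),\ldots,\mathrm{Tr}(\beta\alpha_{n-1}),\mathrm{Tr}(\beta^q\alpha_0),\ldots,\mathrm{Tr}(\beta^q\alpha_{n-1})\right)$. Let $\mathscr{C}$ be an $\mathbb{F}_q$-linear additive conjucyclic code of length $n$ over $\mathbb{F}_{q^2}$, $\mathscr{D}=\Psi(\mathscr{C})$, and $\mathcal{H}(\mathscr{C})$ the largest $q$-ary cyclic code contained in $\mathscr{C}$. Then for any $\vec{d}=(d_0,\ldots,d_{2n-1})\in\mathscr{D}$, $\vec{d}\in\Psi(\mathcal{H}(\mathscr{C}))$ if and only if $d_i=d_{n+i}$ for all $0\leq i\leq n-1$.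
   Context: An $\mathbb{F}_q$-linear additive code of length $n$ over $\mathbb{F}_{q^2}$ is an $\mathbb{F}_q$-subspace of $\mathbb{F}_{q^2}^n$; it is conjucyclic if closed under $T(c_0,\ldots,c_{n-1})=(c_{n-1}^q,c_0,\ldots,c_{n-2})$. A $q$-ary cyclic code of length $n$ is an $\mathbb{F}_q$-subspace of $\mathbb{F}_q^n$ closed under the cyclic shift $(c_0,\ldots,c_{n-1})\mapsto(c_{n-1},c_0,\ldots,c_{n-2})$; here $\mathbb{F}_q^n\subseteq\mathbb{F}_{q^2}^n$. *)

From HB Require Import structures.
From mathcomp Require Import all_boot all_order all_algebra all_field.
Set Implicit Arguments. Unset Strict Implicit. Unset Printing Implicit Defensive.
Import GRing.Theory.
Local Open Scope ring_scope.

Definition prime_power (q : nat) : Prop :=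
  exists p k : nat, [/\ prime p, (0 < k)%N & q = (p ^ k)%N].

Section Defs.
Variables (L : finFieldType) (q : nat).

(* F_q as the subfield of L (with #|L| = q^2) fixed by x |-> x^q *)
Definition inFq (x : L) : bool := x ^+ q == x.

Definition Tr (x : L) : L := x + x ^+ q.

Variable n : nat.

Definition Fq_linear (C : {set 'rV[L]_n}) : Prop :=
  [/\ 0 \in C,
      {in C &, forall u v, u + v \in C} &
      forall a u, inFq a -> u \in C -> a *: u \in C].

(* conjucyclic shift T(c_0..c_{n-1}) = (c_{n-1}^q, c_0, ..., c_{n-2}) *)
Definition conj_shift (c : 'rV[L]_n) : 'rV[L]_n :=
  \row_i (if val i == 0%N then (c 0 (ord_pred i)) ^+ q else c 0 (ord_pred i)).

Definition cyc_shift (c : 'rV[L]_n) : 'rV[L]_n :=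
  \row_i c 0 (ord_pred i).

Definition conjucyclic_code (C : {set 'rV[L]_n}) : Prop :=
  Fq_linear C /\ {in C, forall c, conj_shift c \in C}.

Definition qary_cyclic_code (D : {set 'rV[L]_n}) : Prop :=
  [/\ (forall c, c \in D -> forall i : 'I_n, inFq (c 0 i)),
      Fq_linear D &
      {in D, forall c, cyc_shift c \in D}].

Definition largest_cyclic_in (C H : {set 'rV[L]_n}) : Prop :=
  [/\ qary_cyclic_code H, H \subset C &
      forall H' : {set 'rV[L]_n}, qary_cyclic_code H' -> H' \subset C -> H' \subset H].

Definition Psi (beta : L) (c : 'rV[L]_n) : 'rV[L]_(n + n) :=
  \row_(i < n + n) match split i with
                   | inl j => Tr (beta * c 0 j)
                   | inr j => Tr (beta ^+ q * c 0 j)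
                   end.

End Defs.

From HB Require Import structures.
From mathcomp Require Import all_boot all_order all_algebra all_field.
From mathcomp Require Import ring zify.
Import GRing.Theory.
Local Open Scope ring_scope.

(* Since beta^q != beta, the identity
     Tr(beta c) - Tr(beta^q c) = (beta - beta^q) (c - c^q)
   shows that the two halves of Psi(c) agree exactly when c is F_q-valued.
   Over F_q-valued words the conjucyclic shift is the cyclic shift, so the
   F_q-valued part of a conjucyclic code C is a q-ary cyclic code; it contains
   every cyclic subcode of C, hence it is H(C). *)

Lemma prime_power_gt1 {q : nat} : prime_power q -> (1 < q)%N.
Proof.
by move=> [p [k [p_pr k_gt0 ->]]]; rewrite -[1%N](expn0 p) ltn_exp2l ?prime_gt1.
Qed.

Lemma prime_power_pchar_nat {L : finFieldType} {q : nat} :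
  prime_power q -> #|L| = (q ^ 2)%N -> [pchar L].-nat q.
Proof.
move=> [p [k [p_pr k_gt0 ->]]] cardL.
have pL : p \in [pchar L] by apply: (@card_finPcharP _ _ (k * 2)); rewrite // expnM.
by rewrite pnatX (pnatE _ p_pr) pL.
Qed.

Section PrimitiveRoot.
Context {R : nzRingType} {q : nat} {beta : R}.
Hypotheses (q_gt1 : (1 < q)%N) (prim : (q ^ 2 - 1)%N.-primitive_root beta).

Lemma prim_root_expqq : beta ^+ q ^+ q = beta.
Proof.
rewrite -exprM -[X in _ = X]expr1; apply/eqP; rewrite (eq_prim_root_expr prim).
by rewrite (_ : q * q = 1 + (q ^ 2 - 1))%N ?modnDr //; lia.
Qed.

Lemma prim_root_expq_neq : beta ^+ q != beta.
Proof.
rewrite -[X in _ != X]expr1 (eq_prim_root_expr prim) !modn_small //; nia.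
Qed.

End PrimitiveRoot.

Section Psi.
Context {L : finFieldType} {q n : nat} {beta : L}.
Hypotheses (betaqq : beta ^+ q ^+ q = beta) (betaq_neq : beta ^+ q != beta).

Lemma Tr_mul_eq (c : L) : (Tr q (beta * c) == Tr q (beta ^+ q * c)) = (c ^+ q == c).
Proof.
rewrite /Tr !exprMn betaqq -subr_eq0.
have -> : beta * c + beta ^+ q * c ^+ q - (beta ^+ q * c + beta * c ^+ q)
          = (beta - beta ^+ q) * (c - c ^+ q) by ring.
by rewrite mulf_eq0 subr_eq0 eq_sym (negbTE betaq_neq) subr_eq0 eq_sym.
Qed.

Lemma Psi_lshift (c : 'rV[L]_n) i : Psi q beta c 0 (lshift n i) = Tr q (beta * c 0 i).
Proof. by rewrite mxE (unsplitK (inl i : 'I_n + 'I_n)). Qed.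

Lemma Psi_rshift (c : 'rV[L]_n) i :
  Psi q beta c 0 (rshift n i) = Tr q (beta ^+ q * c 0 i).
Proof. by rewrite mxE (unsplitK (inr i : 'I_n + 'I_n)). Qed.

Lemma Psi_halves_eqP (c : 'rV[L]_n) :
  (forall i, Psi q beta c 0 (lshift n i) = Psi q beta c 0 (rshift n i)) <->
  (forall i, inFq q (c 0 i)).
Proof.
split=> [halves_eq i | cF i].
  by rewrite /inFq -Tr_mul_eq -Psi_lshift -Psi_rshift halves_eq.
by apply/eqP; rewrite Psi_lshift Psi_rshift Tr_mul_eq; apply: cF.
Qed.

End Psi.

Section FqSubcode.
Context {L : finFieldType} {q n : nat}.

Definition Fq_subcode (C : {set 'rV[L]_n}) : {set 'rV[L]_n} :=
  [set c in C | [forall i, inFq q (c 0 i)]].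

Lemma Fq_subcodeP (C : {set 'rV[L]_n}) c :
  reflect (c \in C /\ forall i, inFq q (c 0 i)) (c \in Fq_subcode C).
Proof. by rewrite inE; apply: (iffP andP) => -[cC /forallP cF]; split. Qed.

Lemma cyc_shift_conj_shift (c : 'rV[L]_n) :
  (forall i, inFq q (c 0 i)) -> cyc_shift c = conj_shift q c.
Proof. by move=> cF; apply/rowP => i; rewrite !mxE (eqP (cF _)) if_same. Qed.

Hypothesis qchar : [pchar L].-nat q.

Lemma Fq_linear_subcode (C : {set 'rV[L]_n}) :
  Fq_linear q C -> Fq_linear q (Fq_subcode C).
Proof.
have /andP[q_gt0 _] := qchar.
move=> [C0 CD CZ]; split.
- by apply/Fq_subcodeP; split=> // i; rewrite /inFq mxE expr0n gtn_eqF.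
- move=> u v /Fq_subcodeP[uC uF] /Fq_subcodeP[vC vF].
  apply/Fq_subcodeP; split=> [|i]; first exact: CD.
  by rewrite /inFq mxE (exprDn_pchar _ _ qchar) (eqP (uF i)) (eqP (vF i)).
- move=> a u aF /Fq_subcodeP[uC uF].
  apply/Fq_subcodeP; split=> [|i]; first exact: CZ.
  by rewrite /inFq mxE exprMn (eqP aF) (eqP (uF i)).
Qed.

Lemma qary_cyclic_Fq_subcode (C : {set 'rV[L]_n}) :
  conjucyclic_code q C -> qary_cyclic_code q (Fq_subcode C).
Proof.
move=> [linC shiftC]; split; first by move=> c /Fq_subcodeP[].
  exact: Fq_linear_subcode.
move=> c /Fq_subcodeP[cC cF]; rewrite cyc_shift_conj_shift //.
apply/Fq_subcodeP; split; first exact: shiftC.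
by move=> i; rewrite /inFq !mxE; case: ifP => _; rewrite !(eqP (cF _)).
Qed.

Lemma largest_cyclic_inE {C H : {set 'rV[L]_n}} :
  conjucyclic_code q C -> largest_cyclic_in q C H -> H = Fq_subcode C.
Proof.
move=> conjC [[HF _ _] subHC maxH]; apply/eqP; rewrite eqEsubset.
apply/andP; split; last first.
  by apply: maxH; [exact: qary_cyclic_Fq_subcode | apply/subsetP => c /Fq_subcodeP[]].
apply/subsetP => c cH; apply/Fq_subcodeP; split; [exact: (subsetP subHC) | exact: HF].
Qed.

End FqSubcode.

Theorem theorem3p14 (q : nat) (L : finFieldType) (n : nat) (beta : L)
    (C H : {set 'rV[L]_n}) :
  prime_power q ->
  #|L| = (q ^ 2)%N ->
  (q ^ 2 - 1)%N.-primitive_root beta ->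
  conjucyclic_code q C ->
  largest_cyclic_in q C H ->
  forall d : 'rV[L]_(n + n), d \in [set Psi q beta c | c in C] ->
    (d \in [set Psi q beta c | c in H] <->
     forall i : 'I_n, d 0 (lshift n i) = d 0 (rshift n i)).
Proof.
move=> q_pp cardL prim conjC maxH d /imsetP[c cC ->].
have q_gt1 := prime_power_gt1 q_pp.
have betaqq := prim_root_expqq q_gt1 prim.
have betaq_neq := prim_root_expq_neq q_gt1 prim.
rewrite (largest_cyclic_inE (prime_power_pchar_nat q_pp cardL) conjC maxH).
split=> [/imsetP[h /Fq_subcodeP[_ hF] ->] | /Psi_halves_eqP cF].
  exact/Psi_halves_eqP.
by apply/imsetP; exists c => //; apply/Fq_subcodeP; split; last exact: cF.
Qed.
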